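(* Let $G$ be a compact abelian group with discrete dual group $\Gamma$ and let $a, b \in \mathbb{N}$ be coprime. A subset $E \subset \Gamma$ is $(ab)$-PR if and only if $E$ is both $a$-PR and $b$-PR.
   Context: Characters are written multiplicatively; $\mathbb{Z}_N$ is identified with the $N$-th roots of unity in the unit circle $\mathbb{T}$. For $N \in \mathbb{N}$, a subset $E \subset \Gamma$ is $N$-PR if for every function $\varphi: E \to \mathbb{Z}_N$ there exists $x \in G$ with $\varphi(\gamma) = \gamma(x)$ for all $\gamma \in E$. *)

From HB Require Import structures.
From mathcomp Require Import all_boot all_order all_algebra.
From mathcomp Require Import all_classical all_reals all_analysis.
From mathcomp Require Import complex.
Import GRing.Theory Num.Theory numFieldNormedType.Exports.

Set Implicit Arguments.

Unset Strict Implicit.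
Unset Printing Implicit Defensive.

Local Open Scope ring_scope.
Local Open Scope classical_set_scope.

(* The complex numbers R[i] (R a real field), seen as a numFieldType so that
   they carry their canonical (modulus-)norm topology. *)
Definition CC (R : realType) : numFieldType := R[i].

Definition circle (R : realType) : set (CC R) := [set z | `|z| = 1].

(* Z_N identified with the N-th roots of unity in T. *)
Definition roots_of_unity (R : realType) (N : nat) : set (CC R) :=
  [set z | z ^+ N = 1].

Definition is_character (R : realType) (G : topologicalZmodType)
  (gam : G -> CC R) : Prop :=
  [/\ continuous gam,
      (forall x, @circle R (gam x)) &
      (forall x y, gam (x + y) = gam x * gam y)].

Definition dual (R : realType) (G : topologicalZmodType) : set (G -> CC R) :=
  [set gam | is_character gam].

Definition PR (R : realType) (G : topologicalZmodType) (N : nat)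
  (E : set (G -> CC R)) : Prop :=
  forall phi : (G -> CC R) -> CC R,
    (forall gam, E gam -> @roots_of_unity R N (phi gam)) ->
    exists x : G, forall gam, E gam -> phi gam = gam x.

From HB Require Import structures.
From mathcomp Require Import all_boot all_order all_algebra.
From mathcomp Require Import all_classical all_reals all_analysis.
From mathcomp Require Import complex.
Import GRing.Theory Num.Theory numFieldNormedType.Exports.
Local Open Scope classical_set_scope.
Local Open Scope ring_scope.

(* Passing to a divisor is trivial. Conversely, with the Chinese remainder
   idempotents e1 = (1 mod a, 0 mod b) and e2 = (0 mod a, 1 mod b), an
   (ab)-th root of unity z splits as z = z^e1 * z^e2 with z^e1 an a-th and
   z^e2 a b-th root of unity. Applying a-PR to g |-> phi(g)^e1 and b-PR to
   g |-> phi(g)^e2 gives points x1, x2, and x1 + x2 realises phi because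
   characters turn sums into products. *)

Lemma chinese_idempotents_sum (a b : nat) : coprime a b ->
  (chinese a b 1 0 + chinese a b 0 1 = 1 %[mod a * b])%N.
Proof.
move=> co_ab; apply/eqP; rewrite chinese_remainder //; apply/andP.
by split; rewrite -modnDm ?chinese_modl ?chinese_modr // modnDm.
Qed.

Lemma expr_unity_dvd (R : pzRingType) (z : R) (m n e : nat) :
  z ^+ (m * n) = 1 -> (n %| e)%N -> (z ^+ e) ^+ m = 1.
Proof.
move=> zmn1 dvd_n_e; rewrite -exprM; apply: expr_dvd zmn1 _.
by rewrite mulnC dvdn_mul.
Qed.

Lemma expr_chinese_split (R : pzRingType) (z : R) (a b : nat) :
  coprime a b -> z ^+ (a * b) = 1 ->
  z ^+ chinese a b 1 0 * z ^+ chinese a b 0 1 = z.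
Proof.
move=> co_ab zab1.
by rewrite -exprD -(expr_mod _ zab1) chinese_idempotents_sum // expr_mod.
Qed.

Section PRSets.

Variables (R : realType) (G : topologicalZmodType) (E : set (G -> CC R)).

Lemma PR_dvdn (n d : nat) : (d %| n)%N -> PR n E -> PR d E.
Proof.
move=> /dvdnP[k ->] PRn phi phi_d; apply: PRn => gam Egam.
by rewrite /roots_of_unity /= mulnC exprM phi_d // expr1n.
Qed.

Hypothesis E_mul : forall gam, E gam -> forall x y, gam (x + y) = gam x * gam y.

Lemma PR_mul_coprime (a b : nat) :
  coprime a b -> PR a E -> PR b E -> PR (a * b) E.
Proof.
move=> co_ab PRa PRb phi phi_ab.
have [|x1 phi1E] := PRa (fun gam => phi gam ^+ chinese a b 1 0).
  move=> gam /phi_ab phi_ab1; apply: expr_unity_dvd phi_ab1 _.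
  by rewrite /dvdn chinese_modr // mod0n.
have [|x2 phi2E] := PRb (fun gam => phi gam ^+ chinese a b 0 1).
  move=> gam /phi_ab; rewrite /roots_of_unity /= mulnC => phi_ba1.
  by apply: expr_unity_dvd phi_ba1 _; rewrite /dvdn chinese_modl // mod0n.
exists (x1 + x2) => gam Egam.
by rewrite E_mul // -phi1E // -phi2E // expr_chinese_split // phi_ab.
Qed.

End PRSets.

Theorem corollary2p5 (R : realType) (G : topologicalZmodType)
  (Gcompact : compact [set: G]) (Ghaus : hausdorff_space G)
  (a b : nat) (a_pos : (0 < a)%N) (b_pos : (0 < b)%N) (ab_coprime : coprime a b)
  (E : set (G -> CC R)) (E_sub : E `<=` @dual R G) :
  PR (a * b)%N E <-> PR a E /\ PR b E.
Proof.
split=> [PRab | [PRa PRb]].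
  split; apply: PR_dvdn PRab.
    exact: dvdn_mulr (dvdnn a).
  exact: dvdn_mull (dvdnn b).
by apply: PR_mul_coprime => // gam /E_sub[].
Qed.
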